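(* Assume $k$ satisfies (A1)–(A3) and $\alpha>1$. Then the function $f_r:(0,\infty)\to\mathbb{R}$, $f_r(c)=\frac{k(c)-r}{c}$, has a unique critical point $c_{opt}$, i.e. a unique $c>0$ with $k'(c)=\frac{k(c)-r}{c}$, and $c_{opt}$ is a global maximizer of $f_r$ on $(0,\infty)$. Moreover, in the sigmoidal case (A3)(ii), $c_{opt}>c_{infl}$.
   Context: Let $r>0$ and let $k:[0,\infty)\to[0,\infty)$ satisfy: (A1) $k(0)=0$, $k$ is continuous and strictly increasing on $[0,\infty)$, and twice differentiable on $(0,\infty)$; (A2) $\lim_{c\to\infty}k(c)=k_{max}<\infty$; (A3) either (i) (concave case) $k''(c)<0$ for all $c>0$, or (ii) (sigmoidal case) there is $c_{infl}>0$ with $k''(c)>0$ for $0<c<c_{infl}$ and $k''(c)<0$ for $c>c_{infl}$. Set $\alpha=k_{max}/r$. *)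

From Stdlib Require Import Reals.
From Coquelicot Require Import Coquelicot.
Open Scope R_scope.

(* Second derivative of k (meaningful on (0,oo) where k is twice differentiable). *)
Definition k2 (k : R -> R) (c : R) : R := Derive (Derive k) c.

Definition hypA1 (k : R -> R) : Prop :=
  k 0 = 0 /\
  (forall c, 0 <= c -> 0 <= k c) /\
  (forall c, 0 <= c ->
     filterlim k (within (fun x => 0 <= x) (locally c)) (locally (k c))) /\
  (forall x y, 0 <= x -> x < y -> k x < k y) /\
  (forall c, 0 < c -> ex_derive k c) /\
  (forall c, 0 < c -> ex_derive (Derive k) c).

Definition hypA2 (k : R -> R) (kmax : R) : Prop :=
  is_lim k p_infty kmax.

Definition concave_case (k : R -> R) : Prop :=
  forall c, 0 < c -> k2 k c < 0.

Definition sigmoidal_case (k : R -> R) (c_infl : R) : Prop :=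
  0 < c_infl /\
  (forall c, 0 < c -> c < c_infl -> 0 < k2 k c) /\
  (forall c, c_infl < c -> k2 k c < 0).

Definition hypA3 (k : R -> R) : Prop :=
  concave_case k \/ exists c_infl, sigmoidal_case k c_infl.

Definition f_r (k : R -> R) (r c : R) : R := (k c - r) / c.

From Stdlib Require Import Reals Lra Ranalysis5.
From Coquelicot Require Import Coquelicot.
Open Scope R_scope.

(* For c > 0 write g(c) = c k'(c) - k(c) + r ("tangent gap").
   Then f_r'(c) = g(c) / c^2 and g'(c) = c k''(c), so the critical points of
   f_r are exactly the zeros of g, and g rises where k is convex and falls
   where k is concave.  Moreover g > 0 near 0 (there k < r and k' >= 0), hence
   g > 0 on the whole convex part (0, p], where p = c_infl in the sigmoidal
   case; beyond p, g is strictly decreasing and eventually negative, because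
   k(c) -> k_max > r while c k'(c) <= 2 (k(c) - k(c/2)) -> 0.
   So g changes sign exactly once, at some c_opt > p: f_r increases on
   (0, c_opt) and decreases afterwards. *)

Lemma increasing_of_pos_derive (f df : R -> R) a b : a < b ->
  (forall x, a <= x <= b -> is_derive f x (df x)) ->
  (forall x, a < x < b -> 0 < df x) -> f a < f b.
Proof.
  intros Hab Hder Hpos.
  destruct (MVT_cor2 f df a b Hab) as [x [Hmvt Hx]].
  { intros; apply is_derive_Reals; auto. }
  specialize (Hpos x Hx). nra.
Qed.

Lemma decreasing_of_neg_derive (f df : R -> R) a b : a < b ->
  (forall x, a <= x <= b -> is_derive f x (df x)) ->
  (forall x, a < x < b -> df x < 0) -> f b < f a.
Proof.
  intros Hab Hder Hneg.
  destruct (MVT_cor2 f df a b Hab) as [x [Hmvt Hx]].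
  { intros; apply is_derive_Reals; auto. }
  specialize (Hneg x Hx). nra.
Qed.

(* The derivative of a function increasing on [0, oo) is nonnegative
   at every interior point: a negative derivative would make a forward
   difference quotient negative. *)
Lemma derive_nonneg_of_increasing (k : R -> R) c l :
  (forall x y, 0 <= x -> x < y -> k x < k y) -> 0 < c -> is_derive k c l -> 0 <= l.
Proof.
  intros Hinc Hc Hder. apply is_derive_Reals in Hder.
  destruct (Rle_or_lt 0 l) as [Hl | Hl]; [exact Hl | exfalso].
  destruct (Hder (- l / 2) ltac:(lra)) as [d Hd].
  pose proof (cond_pos d) as Hd0.
  assert (Hquot : 0 < (k (c + d / 2) - k c) / (d / 2)).
  { apply Rdiv_lt_0_compat; [| lra].
    assert (k c < k (c + d / 2)) by (apply Hinc; lra). lra. }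
  assert (Hclose : Rabs ((k (c + d / 2) - k c) / (d / 2) - l) < - l / 2).
  { apply Hd; [lra | rewrite Rabs_right; lra]. }
  apply Rabs_def2 in Hclose. lra.
Qed.

Lemma decreasing_sign_change (g : R -> R) p C : p < C ->
  (forall x, p <= x -> continuity_pt g x) ->
  (forall a b, p <= a -> a < b -> g b < g a) ->
  0 < g p -> g C < 0 ->
  exists z, p < z /\ g z = 0 /\
    (forall x, p <= x < z -> 0 < g x) /\ (forall x, z < x -> g x < 0).
Proof.
  intros HpC Hcont Hdecr Hp HC.
  destruct (IVT_interv (fun x => - g x) p C) as [z [Hz Hgz]];
    [intros; apply continuity_pt_opp, Hcont; lra | lra | lra | lra |].
  assert (Hzero : g z = 0) by lra.
  assert (Hpz : p < z) by (destruct (Req_dec p z); subst; lra).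
  exists z; repeat split; [lra | exact Hzero | |].
  - intros x [Hx Hxz]. rewrite <- Hzero. apply Hdecr; lra.
  - intros x Hzx. rewrite <- Hzero. apply Hdecr; lra.
Qed.

Lemma max_at_sign_change (f df : R -> R) z : 0 < z ->
  (forall x, 0 < x -> is_derive f x (df x)) ->
  (forall x, 0 < x < z -> 0 < df x) -> (forall x, z < x -> df x < 0) ->
  forall c, 0 < c -> f c <= f z.
Proof.
  intros Hz Hder Hpos Hneg c Hc.
  destruct (Rtotal_order c z) as [Hcz | [-> | Hzc]].
  - left. apply (increasing_of_pos_derive f df); auto.
    + intros; apply Hder; lra.
    + intros; apply Hpos; lra.
  - lra.
  - left. apply (decreasing_of_neg_derive f df); auto.
    + intros; apply Hder; lra.
    + intros; apply Hneg; lra.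
Qed.

Section TangentGap.

Variables (k : R -> R) (r : R).
Hypothesis r_pos : 0 < r.
Hypothesis k_incr : forall x y, 0 <= x -> x < y -> k x < k y.
Hypothesis k_diff : forall c, 0 < c -> ex_derive k c.
Hypothesis k'_diff : forall c, 0 < c -> ex_derive (Derive k) c.

Definition tangent_gap (c : R) : R := c * Derive k c - k c + r.

Lemma f_r_is_derive c : 0 < c -> is_derive (f_r k r) c (tangent_gap c / (c * c)).
Proof.
  intros Hc. unfold tangent_gap, f_r. pose proof (k_diff c Hc).
  auto_derive; [split; [assumption | lra] |].
  change (fun x : R => k x) with k. field. lra.
Qed.

Lemma tangent_gap_is_derive c : 0 < c -> is_derive tangent_gap c (c * k2 k c).
Proof.
  intros Hc. unfold tangent_gap, k2. pose proof (k_diff c Hc). pose proof (k'_diff c Hc).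
  auto_derive; [repeat split; assumption |].
  change (fun x : R => Derive k x) with (Derive k). change (fun x : R => k x) with k. ring.
Qed.

Lemma tangent_gap_continuous c : 0 < c -> continuity_pt tangent_gap c.
Proof.
  intros Hc. apply derivable_continuous_pt. exists (c * k2 k c).
  apply is_derive_Reals, tangent_gap_is_derive, Hc.
Qed.

Lemma critical_point_iff c : 0 < c -> Derive k c = f_r k r c <-> tangent_gap c = 0.
Proof.
  intros Hc. unfold f_r, tangent_gap. split; intros Heq.
  - rewrite Heq. field. lra.
  - replace (k c - r) with (c * Derive k c) by lra. field. lra.
Qed.

Lemma tangent_gap_increasing a b : 0 < a -> a < b ->
  (forall x, a < x < b -> 0 < k2 k x) -> tangent_gap a < tangent_gap b.
Proof.
  intros Ha Hab Hconv. apply (increasing_of_pos_derive _ (fun x => x * k2 k x)); auto.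
  - intros; apply tangent_gap_is_derive; lra.
  - intros x Hx. apply Rmult_lt_0_compat; [lra | auto].
Qed.

Lemma tangent_gap_decreasing a b : 0 < a -> a < b ->
  (forall x, a < x < b -> k2 k x < 0) -> tangent_gap b < tangent_gap a.
Proof.
  intros Ha Hab Hconc. apply (decreasing_of_neg_derive _ (fun x => x * k2 k x)); auto.
  - intros; apply tangent_gap_is_derive; lra.
  - intros x Hx. specialize (Hconc x Hx). nra.
Qed.

Hypothesis k_zero : k 0 = 0.
Hypothesis k_cont0 : filterlim k (within (fun x => 0 <= x) (locally 0)) (locally (k 0)).

(* Near 0, k(c) < r by continuity and k'(c) >= 0, so g(c) > 0. *)
Lemma tangent_gap_pos_near_zero :
  exists c0, 0 < c0 /\ forall c, 0 < c <= c0 -> 0 < tangent_gap c.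
Proof.
  rewrite k_zero in k_cont0.
  apply filterlim_locally with (eps := mkposreal r r_pos) in k_cont0.
  destruct k_cont0 as [d Hd]. pose proof (cond_pos d) as Hd0.
  exists (d / 2). split; [lra |]. intros c Hc.
  assert (Hball : ball 0 (mkposreal r r_pos) (k c)).
  { apply Hd; [| lra].
    unfold ball; simpl; unfold AbsRing_ball, abs, minus, plus, opp; simpl.
    rewrite Ropp_0, Rplus_0_r, Rabs_right; lra. }
  unfold ball in Hball; simpl in Hball.
  unfold AbsRing_ball, abs, minus, plus, opp in Hball; simpl in Hball.
  rewrite Ropp_0, Rplus_0_r in Hball. apply Rabs_def2 in Hball.
  assert (0 <= Derive k c).
  { apply (derive_nonneg_of_increasing k c); [auto | lra |].
    apply Derive_correct, k_diff; lra. }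
  unfold tangent_gap. assert (0 <= c * Derive k c) by (apply Rmult_le_pos; lra). lra.
Qed.

Lemma tangent_gap_pos_on_convex_part q :
  (forall c, 0 < c -> c < q -> 0 < k2 k c) -> forall c, 0 < c <= q -> 0 < tangent_gap c.
Proof.
  intros Hconv c Hc. destruct tangent_gap_pos_near_zero as [c0 [Hc0 Hnear]].
  destruct (Rle_or_lt c c0) as [Hle | Hlt]; [apply Hnear; lra |].
  apply Rlt_trans with (tangent_gap c0); [apply Hnear; lra |].
  apply tangent_gap_increasing; [lra | lra |]. intros; apply Hconv; lra.
Qed.

(* Under (A3) there is p > 0 such that g > 0 on (0, p] and k is strictly
   concave beyond p (p = c_infl in the sigmoidal case). *)
Lemma tangent_gap_profile : hypA3 k ->
  exists p, 0 < p /\ (forall c, 0 < c <= p -> 0 < tangent_gap c) /\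
            (forall c, p < c -> k2 k c < 0).
Proof.
  intros [Hconc | [ci [Hci [Hconv Hconc]]]].
  - destruct tangent_gap_pos_near_zero as [c0 [Hc0 Hnear]].
    exists c0. repeat split; auto. intros c Hc; apply Hconc; lra.
  - exists ci. repeat split; auto. apply tangent_gap_pos_on_convex_part, Hconv.
Qed.

(* If k -> k_max > r and k is concave beyond p, then g becomes negative:
   for large a, 2a k'(2a) < 2a k'(xi) = 2 (k(2a) - k(a)) is small by the mean
   value theorem, while k(2a) - r is close to k_max - r > 0. *)
Lemma tangent_gap_eventually_neg kmax p : 0 < p -> kmax > r -> is_lim k p_infty kmax ->
  (forall c, p < c -> k2 k c < 0) -> exists C, p < C /\ tangent_gap C < 0.
Proof.
  intros Hp Hkr Hlim Hconc. apply is_lim_spec in Hlim.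
  destruct (Hlim (mkposreal ((kmax - r) / 4) ltac:(lra))) as [M HM]. simpl in HM.
  set (a := Rmax M p + 1).
  assert (HMa : M < a) by (unfold a; generalize (Rmax_l M p); lra).
  assert (Hpa : p < a) by (unfold a; generalize (Rmax_r M p); lra).
  exists (2 * a). split; [lra |].
  destruct (MVT_cor2 k (Derive k) a (2 * a)) as [xi [Hmvt Hxi]]; [lra | |].
  { intros; apply is_derive_Reals, Derive_correct, k_diff; lra. }
  assert (Hslope : Derive k (2 * a) < Derive k xi).
  { apply (decreasing_of_neg_derive (Derive k) (k2 k)); [lra | |].
    - intros; apply Derive_correct, k'_diff; lra.
    - intros; apply Hconc; lra. }
  assert (2 * a * Derive k (2 * a) < 2 * a * Derive k xi) by (apply Rmult_lt_compat_l; lra).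
  pose proof (HM a HMa) as Ha. pose proof (HM (2 * a) ltac:(lra)) as H2a.
  apply Rabs_def2 in Ha. apply Rabs_def2 in H2a.
  unfold tangent_gap. nra.
Qed.

End TangentGap.

Theorem lemma1 (k : R -> R) (r kmax : R) :
  0 < r ->
  hypA1 k -> hypA2 k kmax -> hypA3 k ->
  kmax / r > 1 ->
  exists c_opt : R,
    0 < c_opt /\
    Derive k c_opt = f_r k r c_opt /\
    (forall c, 0 < c -> Derive k c = f_r k r c -> c = c_opt) /\
    (forall c, 0 < c -> f_r k r c <= f_r k r c_opt) /\
    (forall c_infl, sigmoidal_case k c_infl -> c_infl < c_opt).
Proof.
  intros Hr [Hk0 [_ [Hcont [Hincr [Hdiff Hdiff2]]]]] Hlim HA3 Hratio.
  set (g := tangent_gap k r).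
  pose proof (Hcont 0 (Rle_refl 0)) as Hcont0.
  assert (Hkr : kmax > r) by (apply Rmult_gt_compat_r with (r := r) in Hratio;
                              [field_simplify in Hratio; lra | lra]).
  destruct (tangent_gap_profile k r Hr Hincr Hdiff Hdiff2 Hk0 Hcont0 HA3)
    as [p [Hp [Hgp Hconc]]].
  destruct (tangent_gap_eventually_neg k r Hdiff Hdiff2 kmax p Hp Hkr Hlim Hconc)
    as [C [HpC HgC]].
  assert (Hgcont : forall x, p <= x -> continuity_pt g x)
    by (intros; apply tangent_gap_continuous; auto; lra).
  assert (Hgdecr : forall a b, p <= a -> a < b -> g b < g a)
    by (intros; apply tangent_gap_decreasing; auto; [lra | intros; apply Hconc; lra]).
  destruct (decreasing_sign_change g p C HpC Hgcont Hgdecr ltac:(apply Hgp; lra) HgC)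
    as [z [Hpz [Hgz [Hbefore Hafter]]]].
  assert (Hpos : forall x, 0 < x < z -> 0 < g x).
  { intros x Hx. destruct (Rle_or_lt x p); [apply Hgp | apply Hbefore]; lra. }
  exists z. repeat split; [lra | apply critical_point_iff; auto; lra | | |].
  - intros c Hc Hcrit. apply critical_point_iff in Hcrit; [| lra].
    destruct (Rtotal_order c z) as [Hcz | [Hcz | Hzc]]; auto.
    + specialize (Hpos c (conj Hc Hcz)). unfold g in Hpos. lra.
    + specialize (Hafter c Hzc). unfold g in Hafter. lra.
  - apply (max_at_sign_change _ (fun x => g x / (x * x))); [lra | apply f_r_is_derive, Hdiff | |].
    + intros x Hx. apply Rdiv_lt_0_compat; [apply Hpos; lra | apply Rmult_lt_0_compat; lra].
    + intros x Hx. apply Rdiv_neg_pos; [apply Hafter; lra | apply Rmult_lt_0_compat; lra].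
  - intros ci [Hci [Hconv _]]. destruct (Rlt_or_le ci z) as [Hlt | Hle]; [exact Hlt |].
    assert (0 < g z) by (apply (tangent_gap_pos_on_convex_part k r Hr Hincr Hdiff Hdiff2
                                  Hk0 Hcont0 ci); auto; lra).
    lra.
Qed.
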